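(* If $k \geq 9$ and $|q - q_k| \leq q_k^{-2k-6}$, then there exists a sequence $(c_j)_{j\ge1} \in 1^k0^{k+4}W_2^\mathbb{N}$ such that $\sum_{j\ge1} c_j q^{-j} = 1$.
   Context: $q_k$ is the unique root in $(1,2)$ of $x^k - x^{k-1} - \cdots - x - 1 = 0$. $W_2 = \{(-1\,0), (0\,{-1}), (00), (01), (10)\}$ is a set of words of length 2 over $\{-1,0,1\}$, and $W_2^\mathbb{N}$ is the set of infinite concatenations of elements of $W_2$. $1^k0^{k+4}W_2^\mathbb{N}$ is the set of sequences in $\{-1,0,1\}^\mathbb{N}$ whose first $2k+4$ entries are $k$ ones followed by $k+4$ zeros and whose tail from index $2k+5$ lies in $W_2^\mathbb{N}$. *)

From Stdlib Require Import Reals ZArith.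
Open Scope R_scope.

Definition is_qk (k : nat) (x : R) : Prop :=
  1 < x < 2 /\ x ^ k - sum_f_R0 (fun i => x ^ i) (k - 1) = 0.

Definition inW2 (a b : Z) : Prop :=
  (a = (-1)%Z /\ b = 0%Z) \/ (a = 0%Z /\ b = (-1)%Z) \/ (a = 0%Z /\ b = 0%Z)
  \/ (a = 0%Z /\ b = 1%Z) \/ (a = 1%Z /\ b = 0%Z).

(* Sequences are indexed from 0: c n stands for c_{n+1}.
   c ∈ 1^k 0^(k+4) W_2^N. *)
Definition in_1k0k4W2N (k : nat) (c : nat -> Z) : Prop :=
  (forall j, (j < k)%nat -> c j = 1%Z) /\
  (forall j, (k <= j < 2 * k + 4)%nat -> c j = 0%Z) /\
  (forall m, inW2 (c (2 * k + 4 + 2 * m)%nat) (c (2 * k + 4 + 2 * m + 1)%nat)).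

From Stdlib Require Import Reals Lra Lia ZArith.
Open Scope R_scope.

(** Read the expansion through its orbit [r 0 = 1], [r (n+1) = q r n - c n]:
    [1 - sum_(j<=n) c j / q^(j+1) = r (n+1) / q^(n+1)], so the expansion equals 1
    as soon as the orbit stays bounded. After the prefix [1^k 0^(k+4)] the orbit is
    [T = q^(k+4) (q^k (q-2) + 1) / (q-1)], which vanishes at [q = q_k] because
    [q_k^k (2 - q_k) = 1]; the hypothesis [|q - q_k| <= q_k^(-2k-6)] keeps [|T| <= 3/5].
    From any [|y| <= 3/5], the word [(a b)] of [W_2] for which [a q + b] is nearest to
    [q^2 y] brings [q^2 y - (a q + b)] back into [[-3/5, 3/5]], so the orbit stays
    bounded forever. *)

Lemma Rabs_le_inv x a : Rabs x <= a -> - a <= x <= a.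
Proof. unfold Rabs; destruct (Rcase_abs x); lra. Qed.

Fixpoint orbit (q r : R) (c : nat -> Z) (n : nat) : R :=
  match n with
  | O => r
  | S n => q * orbit q r c n - IZR (c n)
  end.

Lemma orbit_ext q r c c' n :
  (forall j, c j = c' j) -> orbit q r c n = orbit q r c' n.
Proof. intros Hc; induction n as [|n IH]; simpl; [|rewrite IH, Hc]; reflexivity. Qed.

Lemma orbit_add q r c m n :
  orbit q r c (m + n) = orbit q (orbit q r c m) (fun j => c (m + j)%nat) n.
Proof.
  induction n as [|n IH]; [now rewrite Nat.add_0_r|].
  rewrite Nat.add_succ_r; simpl; now rewrite IH.
Qed.

Lemma orbit_partial_sum q r c N : q <> 0 ->
  sum_f_R0 (fun n => IZR (c n) / q ^ (n + 1)) N = r - orbit q r c (S N) / q ^ S N.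
Proof.
  intros Hq.
  assert (Hpow : forall n, q ^ n <> 0) by (intro; apply pow_nonzero, Hq).
  induction N as [|N IH].
  - simpl; field; exact Hq.
  - cbn [sum_f_R0]; rewrite IH, Nat.add_1_r.
    change (orbit q r c (S (S N))) with (q * orbit q r c (S N) - IZR (c (S N))).
    change (q ^ S (S N)) with (q * q ^ S N).
    field; split; [apply Hpow | exact Hq].
Qed.

Lemma expansion_of_bounded_orbit q c M N0 : 1 < q ->
  (forall n, (N0 <= n)%nat -> Rabs (orbit q 1 c n) <= M) ->
  infinite_sum (fun n => IZR (c n) / q ^ (n + 1)) 1.
Proof.
  intros Hq Hbound eps Heps.
  assert (HM : 0 <= M) by (eapply Rle_trans; [apply Rabs_pos | apply (Hbound N0), le_n]).
  assert (Hinv : Rabs (/ q) < 1).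
  { rewrite Rabs_pos_eq by (left; apply Rinv_0_lt_compat; lra).
    rewrite <- Rinv_1; apply Rinv_lt_contravar; lra. }
  destruct (pow_lt_1_zero (/ q) Hinv (eps / (M + 1))) as [N1 HN1].
  { apply Rdiv_lt_0_compat; lra. }
  exists (N0 + N1)%nat; intros n Hn; unfold Rdist.
  rewrite (orbit_partial_sum q 1) by lra.
  replace (1 - orbit q 1 c (S n) / q ^ S n - 1) with (- (orbit q 1 c (S n) * (/ q) ^ S n))
    by (rewrite pow_inv; field; apply pow_nonzero; lra).
  rewrite Rabs_Ropp, Rabs_mult.
  specialize (Hbound (S n) ltac:(lia)); specialize (HN1 (S n) ltac:(lia)).
  apply Rle_lt_trans with (M * (eps / (M + 1))).
  - apply Rmult_le_compat; [apply Rabs_pos | apply Rabs_pos | exact Hbound | lra].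
  - assert (0 < eps / (M + 1)) by (apply Rdiv_lt_0_compat; lra).
    apply Rlt_le_trans with ((M + 1) * (eps / (M + 1))); [nra | right; field; lra].
Qed.

Lemma orbit_ones q c n : q <> 1 -> (forall j, (j < n)%nat -> c j = 1%Z) ->
  orbit q 1 c n = (q ^ n * (q - 2) + 1) / (q - 1).
Proof.
  intros Hq; apply Rminus_eq_contra in Hq.
  induction n as [|n IH]; intros Hc; simpl.
  - field; exact Hq.
  - rewrite IH, Hc by auto with arith; change (IZR 1) with 1; field; exact Hq.
Qed.

Lemma orbit_zeros q r c n : (forall j, (j < n)%nat -> c j = 0%Z) ->
  orbit q r c n = q ^ n * r.
Proof.
  induction n as [|n IH]; intros Hc; simpl.
  - ring.
  - rewrite IH, Hc by auto with arith; simpl; ring.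
Qed.

Definition prefixed (k : nat) (d : nat -> Z) (n : nat) : Z :=
  if (n <? k)%nat then 1%Z
  else if (n <? 2 * k + 4)%nat then 0%Z
  else d (n - (2 * k + 4))%nat.

Lemma prefixed_in k d : (forall m, inW2 (d (2 * m)%nat) (d (2 * m + 1)%nat)) ->
  in_1k0k4W2N k (prefixed k d).
Proof.
  intros Hd; unfold prefixed; split; [|split].
  - intros j Hj; apply Nat.ltb_lt in Hj; now rewrite Hj.
  - intros j Hj; rewrite (proj2 (Nat.ltb_ge j k)), (proj2 (Nat.ltb_lt j _)) by lia.
    reflexivity.
  - intros m; rewrite !(proj2 (Nat.ltb_ge _ k)), !(proj2 (Nat.ltb_ge _ (2 * k + 4))) by lia.
    replace (2 * k + 4 + 2 * m + 1 - (2 * k + 4))%nat with (2 * m + 1)%nat by lia.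
    replace (2 * k + 4 + 2 * m - (2 * k + 4))%nat with (2 * m)%nat by lia.
    apply Hd.
Qed.

Definition prefix_orbit (k : nat) (q : R) : R :=
  q ^ (k + 4) * (q ^ k * (q - 2) + 1) / (q - 1).

Lemma orbit_prefixed k q d n : q <> 1 ->
  orbit q 1 (prefixed k d) (2 * k + 4 + n) = orbit q (prefix_orbit k q) d n.
Proof.
  intros Hq.
  assert (Hprefix : orbit q 1 (prefixed k d) (k + (k + 4)) = prefix_orbit k q).
  { rewrite orbit_add, orbit_zeros, orbit_ones; trivial.
    - unfold prefix_orbit, Rdiv; ring.
    - intros j Hj; unfold prefixed; apply Nat.ltb_lt in Hj; now rewrite Hj.
    - intros j Hj; unfold prefixed.
      rewrite (proj2 (Nat.ltb_ge _ k)), (proj2 (Nat.ltb_lt _ (2 * k + 4))) by lia.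
      reflexivity. }
  replace (k + (k + 4))%nat with (2 * k + 4)%nat in Hprefix by lia.
  rewrite orbit_add, Hprefix; apply orbit_ext; intros j; unfold prefixed.
  rewrite (proj2 (Nat.ltb_ge _ k)), (proj2 (Nat.ltb_ge _ (2 * k + 4))) by lia.
  f_equal; lia.
Qed.

Lemma qk_identity k x : (1 <= k)%nat -> is_qk k x -> x ^ k * (2 - x) = 1.
Proof.
  intros Hk [[Hx1 Hx2] Hroot].
  rewrite tech3, Nat.sub_1_r, Nat.succ_pred_pos in Hroot by lra || lia.
  assert (Hx : 1 - x <> 0) by lra.
  apply (Rmult_eq_compat_r (1 - x)) in Hroot.
  unfold Rdiv in Hroot; rewrite Rmult_minus_distr_r, Rmult_assoc, Rinv_l in Hroot by exact Hx.
  lra.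
Qed.

Lemma qk_lower_bound k x : (1 <= k)%nat -> is_qk k x -> 2 - / INR k <= x.
Proof.
  intros Hk Hqk; pose proof (qk_identity k x Hk Hqk) as E.
  destruct Hqk as [[Hx1 Hx2] _].
  assert (HK : 1 <= INR k) by (apply (le_INR 1); exact Hk).
  pose proof (poly k (x - 1) ltac:(lra)) as Hbern.
  replace (1 + (x - 1)) with x in Hbern by ring.
  assert (Hprod : (1 + INR k * (x - 1)) * (2 - x) <= 1)
    by (rewrite <- E at 3; apply Rmult_le_compat_r; lra).
  assert (H : INR k * (2 - x) <= 1) by nra.
  apply (Rmult_le_compat_l (/ INR k)) in H; [|left; apply Rinv_0_lt_compat; lra].
  rewrite <- Rmult_assoc, Rinv_l, Rmult_1_l, Rmult_1_r in H by lra.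
  lra.
Qed.

Lemma pow_ge_10_mul x n : 17/9 <= x -> (9 <= n)%nat -> 10 * INR n <= x ^ n.
Proof.
  intros Hx Hn; induction Hn as [|n Hn IH].
  - assert ((17/9) ^ 9 <= x ^ 9) by (apply pow_incr; lra).
    simpl INR; simpl pow in *; lra.
  - rewrite S_INR; simpl pow.
    assert (9 <= INR n) by (apply (le_INR 9) in Hn; simpl in Hn; lra).
    nra.
Qed.

Lemma pow_near_1 r e n : Rabs (r - 1) <= e -> INR n * e <= 1/2 ->
  Rabs (r ^ n - 1) <= 2 * INR n * e.
Proof.
  intros Hr; induction n as [|n IH]; intros Hn.
  - simpl; rewrite Rminus_diag, Rabs_R0; lra.
  - rewrite S_INR in *.
    assert (He : 0 <= e) by (eapply Rle_trans; [apply Rabs_pos | exact Hr]).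
    assert (HnR : 0 <= INR n) by apply pos_INR.
    assert (IH' : Rabs (r ^ n - 1) <= 2 * INR n * e) by (apply IH; nra).
    assert (Habs_r : Rabs r <= 1 + e).
    { replace r with ((r - 1) + 1) at 1 by ring.
      eapply Rle_trans; [apply Rabs_triang | rewrite Rabs_R1; lra]. }
    replace (r ^ S n - 1) with (r * (r ^ n - 1) + (r - 1)) by (simpl; ring).
    eapply Rle_trans; [apply Rabs_triang|]; rewrite Rabs_mult.
    assert (Rabs r * Rabs (r ^ n - 1) <= (1 + e) * (2 * INR n * e))
      by (apply Rmult_le_compat; auto using Rabs_pos).
    nra.
Qed.

Lemma Rabs_pow_near_1 r e n : Rabs (r - 1) <= e -> INR n * e <= 1/2 ->
  Rabs (r ^ n) <= 1 + 2 * INR n * e.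
Proof.
  intros Hr Hn; pose proof (pow_near_1 r e n Hr Hn) as P.
  replace (r ^ n) with ((r ^ n - 1) + 1) by ring.
  eapply Rle_trans; [apply Rabs_triang | rewrite Rabs_R1; lra].
Qed.

Lemma prefix_orbit_scaled k x r : x ^ k * (2 - x) = 1 -> r * x <> 1 ->
  prefix_orbit k (r * x) * (r * x - 1) =
  r ^ (k + 4) * x ^ 4 * x ^ k * ((1 - r ^ k) + r ^ k * x ^ k * (r * x - x)).
Proof.
  intros E Hq; apply Rminus_eq_contra in Hq.
  unfold prefix_orbit, Rdiv; rewrite Rmult_assoc, Rinv_l, Rmult_1_r by exact Hq.
  rewrite !Rpow_mult_distr, !pow_add; apply Rminus_diag_uniq.
  transitivity (r ^ k * r ^ 4 * x ^ k * x ^ 4 * r ^ k * (1 - x ^ k * (2 - x))); [ring|].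
  rewrite E; ring.
Qed.

Lemma near_qk_dist_bound k x q : (9 <= k)%nat -> is_qk k x ->
  Rabs (q - x) <= / x ^ (2 * k + 6) ->
  Rabs (q - x) * ((x ^ k) ^ 2 * x ^ 6) <= 1.
Proof.
  intros Hk [[Hx1 _] _] Hd.
  assert (Hpos : 0 < x ^ (2 * k + 6)) by (apply pow_lt; lra).
  replace ((x ^ k) ^ 2 * x ^ 6) with (x ^ (2 * k + 6))
    by (rewrite <- pow_mult, <- pow_add; f_equal; lia).
  apply (Rmult_le_compat_r (x ^ (2 * k + 6))) in Hd; [|lra].
  rewrite Rinv_l in Hd by lra; exact Hd.
Qed.

Lemma qk_ge_17_9 k x : (9 <= k)%nat -> is_qk k x -> 17/9 <= x.
Proof.
  intros Hk Hqk; pose proof (qk_lower_bound k x ltac:(lia) Hqk).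
  assert (/ INR k <= / 9).
  { apply Rinv_le_contravar; [lra|]. apply (le_INR 9) in Hk; simpl in Hk; lra. }
  lra.
Qed.

Lemma near_qk_range k x q : (9 <= k)%nat -> is_qk k x ->
  Rabs (q - x) <= / x ^ (2 * k + 6) -> 17/10 <= q <= 21/10.
Proof.
  intros Hk Hqk Hd.
  pose proof (near_qk_dist_bound k x q Hk Hqk Hd) as Ha.
  pose proof (qk_ge_17_9 k x Hk Hqk) as Hx; destruct Hqk as [[_ Hx2] _].
  assert (Hbig : 10 <= (x ^ k) ^ 2 * x ^ 6).
  { assert (1 <= (x ^ k) ^ 2) by (rewrite <- pow_mult; apply pow_R1_Rle; lra).
    assert ((17/9) ^ 6 <= x ^ 6) by (apply pow_incr; lra).
    simpl pow in *; nra. }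
  assert (Hd' : Rabs (q - x) <= 1/10) by (pose proof (Rabs_pos (q - x)); nra).
  apply Rabs_le_inv in Hd'; lra.
Qed.

Lemma Rabs_div_sub_1_le q x : 1 <= x -> Rabs (q / x - 1) <= Rabs (q - x).
Proof.
  intros Hx; replace (q / x - 1) with ((q - x) * / x) by (field; lra).
  rewrite Rabs_mult, (Rabs_pos_eq (/ x)) by (left; apply Rinv_0_lt_compat; lra).
  assert (/ x <= 1) by (rewrite <- Rinv_1; apply Rinv_le_contravar; lra).
  pose proof (Rabs_pos (q - x)); nra.
Qed.

Lemma prefix_error_terms K x u d : 9 <= K -> 17/9 <= x -> 10 * K <= u -> 0 <= d ->
  d * (u ^ 2 * x ^ 6) <= 1 -> x ^ 4 * u * (2 * K * d + (1 + 1/200) * u * d) <= 35/100.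
Proof.
  intros HK Hx Hu Hd Ha.
  assert (Hx2 : 289/81 <= x ^ 2) by (simpl; nra).
  assert (Hx4 : 1 <= x ^ 4) by (apply pow_R1_Rle; lra).
  replace (u ^ 2 * x ^ 6) with (u * u * x ^ 4 * x ^ 2) in Ha by ring.
  set (Y := x ^ 4 * u * d).
  assert (HY : 0 <= Y) by (unfold Y; apply Rmult_le_pos; nra).
  assert (HYu : Y * u * x ^ 2 <= 1) by (unfold Y; nra).
  assert (HYK : Y * K * x ^ 2 <= 1/10) by nra.
  replace (x ^ 4 * u * (2 * K * d + (1 + 1/200) * u * d))
    with (2 * (Y * K) + (1 + 1/200) * (Y * u)) by (unfold Y; ring).
  nra.
Qed.

Lemma prefix_orbit_near_qk k x q : (9 <= k)%nat -> is_qk k x ->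
  Rabs (q - x) <= / x ^ (2 * k + 6) -> Rabs (prefix_orbit k q) <= 3/5.
Proof.
  intros Hk Hqk Hd.
  pose proof (near_qk_range k x q Hk Hqk Hd) as Hq.
  pose proof (near_qk_dist_bound k x q Hk Hqk Hd) as Ha.
  pose proof (qk_identity k x ltac:(lia) Hqk) as E.
  pose proof (qk_ge_17_9 k x Hk Hqk) as Hx.
  assert (HK : 9 <= INR k) by (apply (le_INR 9) in Hk; simpl in Hk; lra).
  pose proof (pow_ge_10_mul x k Hx Hk) as Hu.
  set (u := x ^ k) in *; set (d := Rabs (q - x)) in *.
  assert (Hd0 : 0 <= d) by apply Rabs_pos.
  assert (Hsmall : (INR k + 4) * d <= 1/400).
  { assert (1 <= x ^ 6) by (apply pow_R1_Rle; lra).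
    assert (d * u * u <= 1) by nra.
    assert (d * u <= 1/90) by nra.
    nra. }
  pose proof (Rabs_div_sub_1_le q x ltac:(lra)) as Hr; fold d in Hr.
  set (r := q / x) in Hr; assert (Hqr : q = r * x) by (unfold r; field; lra).
  assert (Hrk4 : Rabs (r ^ (k + 4)) <= 1 + 1/200).
  { pose proof (Rabs_pow_near_1 r d (k + 4) Hr) as P; rewrite plus_INR in P; simpl INR in P.
    specialize (P ltac:(lra)); lra. }
  assert (Hrk : Rabs (r ^ k) <= 1 + 1/200)
    by (pose proof (Rabs_pow_near_1 r d k Hr ltac:(nra)); nra).
  assert (Hrk1 : Rabs (1 - r ^ k) <= 2 * INR k * d).
  { rewrite <- Rabs_Ropp, Ropp_minus_distr; apply pow_near_1; [exact Hr | nra]. }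
  assert (Hdelta : Rabs (1 - r ^ k + r ^ k * u * (q - x)) <= 2 * INR k * d + (1 + 1/200) * u * d).
  { eapply Rle_trans; [apply Rabs_triang|]; rewrite !Rabs_mult, (Rabs_pos_eq u) by lra.
    fold d; assert (Rabs (r ^ k) * u * d <= (1 + 1/200) * u * d).
    { apply Rmult_le_compat_r; [exact Hd0|]; apply Rmult_le_compat_r; lra. }
    lra. }
  assert (Hprod : Rabs (prefix_orbit k q * (q - 1)) <= (1 + 1/200) * (35/100)).
  { rewrite Hqr, prefix_orbit_scaled by (exact E || lra); rewrite <- Hqr.
    assert (Hx4 : 1 <= x ^ 4) by (apply pow_R1_Rle; lra).
    fold u; rewrite !Rabs_mult, (Rabs_pos_eq (x ^ 4)), (Rabs_pos_eq u) by lra.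
    set (D := Rabs (1 - r ^ k + r ^ k * u * (q - x))) in *.
    assert (HD : x ^ 4 * u * D <= 35/100).
    { eapply Rle_trans; [apply Rmult_le_compat_l; [nra | exact Hdelta]|].
      apply prefix_error_terms; lra. }
    apply Rle_trans with (Rabs (r ^ (k + 4)) * (x ^ 4 * u * D)); [right; ring|].
    apply Rmult_le_compat; [apply Rabs_pos | | exact Hrk4 | exact HD].
    apply Rmult_le_pos; [nra | apply Rabs_pos]. }
  rewrite Rabs_mult, (Rabs_pos_eq (q - 1)) in Hprod by lra.
  pose proof (Rabs_pos (prefix_orbit k q)); nra.
Qed.

Definition w2_word (q y : R) : Z * Z :=
  let v := q ^ 2 * y in
  if Rlt_dec ((q + 1) / 2) v then (1%Z, 0%Z)
  else if Rlt_dec (1 / 2) v then (0%Z, 1%Z)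
  else if Rle_dec (- (1 / 2)) v then (0%Z, 0%Z)
  else if Rle_dec (- ((q + 1) / 2)) v then (0%Z, (-1)%Z)
  else ((-1)%Z, 0%Z).

Definition w2_value (q : R) (w : Z * Z) : R := IZR (fst w) * q + IZR (snd w).

Lemma w2_word_in q y : inW2 (fst (w2_word q y)) (snd (w2_word q y)).
Proof.
  unfold w2_word, inW2.
  repeat (destruct (Rlt_dec _ _) || destruct (Rle_dec _ _)); simpl; tauto.
Qed.

Lemma w2_word_step q y : 17/10 <= q <= 21/10 -> Rabs y <= 3/5 ->
  Rabs (q ^ 2 * y - w2_value q (w2_word q y)) <= 3/5 /\
  Rabs (q * y - IZR (fst (w2_word q y))) <= 3.
Proof.
  intros Hq Hy; apply Rabs_le_inv in Hy.
  assert (Hv : - (3/5 * q ^ 2) <= q ^ 2 * y <= 3/5 * q ^ 2) by (simpl; nra).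
  assert (3/5 * q ^ 2 - q <= 3/5) by (simpl; nra).
  assert (- (3/2) <= q * y <= 3/2) by nra.
  unfold w2_word, w2_value.
  repeat (destruct (Rlt_dec _ _) || destruct (Rle_dec _ _));
    simpl fst; simpl snd; split; apply Rabs_le; simpl IZR; lra.
Qed.

Fixpoint w2_state (q y0 : R) (m : nat) : R :=
  match m with
  | O => y0
  | S m => let y := w2_state q y0 m in q ^ 2 * y - w2_value q (w2_word q y)
  end.

Definition w2_tail (q y0 : R) (n : nat) : Z :=
  let w := w2_word q (w2_state q y0 (Nat.div2 n)) in
  if Nat.even n then fst w else snd w.

Lemma w2_tail_even q y0 m : w2_tail q y0 (2 * m) = fst (w2_word q (w2_state q y0 m)).
Proof. unfold w2_tail; now rewrite Nat.div2_double, Nat.even_mul. Qed.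

Lemma w2_tail_odd q y0 m : w2_tail q y0 (S (2 * m)) = snd (w2_word q (w2_state q y0 m)).
Proof.
  unfold w2_tail; rewrite Nat.div2_succ_double, Nat.even_succ, Nat.odd_mul; reflexivity.
Qed.

Lemma w2_tail_in q y0 m : inW2 (w2_tail q y0 (2 * m)) (w2_tail q y0 (2 * m + 1)).
Proof. rewrite Nat.add_1_r, w2_tail_even, w2_tail_odd; apply w2_word_in. Qed.

Lemma orbit_w2_tail q y0 m : orbit q y0 (w2_tail q y0) (2 * m) = w2_state q y0 m.
Proof.
  induction m as [|m IH]; [reflexivity|].
  replace (2 * S m)%nat with (S (S (2 * m))) by lia.
  change (orbit q y0 (w2_tail q y0) (S (S (2 * m)))) with
    (q * (q * orbit q y0 (w2_tail q y0) (2 * m) - IZR (w2_tail q y0 (2 * m)))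
     - IZR (w2_tail q y0 (S (2 * m)))).
  rewrite w2_tail_odd, w2_tail_even, IH; cbn [w2_state]; unfold w2_value; ring.
Qed.

Lemma w2_state_bounded q y0 m : 17/10 <= q <= 21/10 -> Rabs y0 <= 3/5 ->
  Rabs (w2_state q y0 m) <= 3/5.
Proof.
  intros Hq Hy0; induction m as [|m IH]; [exact Hy0|].
  exact (proj1 (w2_word_step q _ Hq IH)).
Qed.

Lemma orbit_w2_tail_bounded q y0 n : 17/10 <= q <= 21/10 -> Rabs y0 <= 3/5 ->
  Rabs (orbit q y0 (w2_tail q y0) n) <= 3.
Proof.
  intros Hq Hy0; pose proof (w2_state_bounded q y0 (Nat.div2 n) Hq Hy0) as Hy.
  destruct (Nat.Even_or_Odd n) as [[m ->] | [m ->]]; rewrite ?Nat.add_1_r in Hy |- *.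
  - rewrite orbit_w2_tail, Nat.div2_double in *; lra.
  - rewrite Nat.div2_succ_double in Hy; cbn [orbit].
    rewrite orbit_w2_tail, w2_tail_even; exact (proj2 (w2_word_step q _ Hq Hy)).
Qed.

Theorem lemma4p1 (k : nat) (qk q : R) :
  (9 <= k)%nat -> is_qk k qk ->
  Rabs (q - qk) <= / qk ^ (2 * k + 6) ->
  exists c : nat -> Z, in_1k0k4W2N k c /\
    infinite_sum (fun n => IZR (c n) / q ^ (n + 1)) 1.
Proof.
  intros Hk Hqk Hd.
  pose proof (near_qk_range k qk q Hk Hqk Hd) as Hq.
  pose proof (prefix_orbit_near_qk k qk q Hk Hqk Hd) as HT.
  exists (prefixed k (w2_tail q (prefix_orbit k q))); split.
  - apply prefixed_in; intros m; apply w2_tail_in.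
  - apply (expansion_of_bounded_orbit q _ 3 (2 * k + 4)); [lra|].
    intros n Hn; replace n with (2 * k + 4 + (n - (2 * k + 4)))%nat by lia.
    rewrite orbit_prefixed by lra.
    apply orbit_w2_tail_bounded; assumption.
Qed.
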